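(* Let $S=(s_{ij})$ be an irreducible $k\times k$ matrix with nonnegative integer entries. If the system of equations $n_is_{ij}=n_js_{ji}$ ($1\le i,j\le k$) has a non-trivial solution $(n_1,\dots,n_k)$, then there exists a connected $S$-regular graph.
   Context: A square matrix is irreducible if its associated directed graph (an arc $i\to j$ iff the $(i,j)$ entry is nonzero) is strongly connected. A simple undirected graph $G=(V,E)$ is $S$-regular if $V$ has a partition into nonempty cells $V_1,\dots,V_k$ such that every vertex $v\in V_i$ has exactly $s_{ij}$ neighbours in $V_j$, for all $i,j$. *)

From mathcomp Require Import all_boot all_order all_algebra.
Set Implicit Arguments. Unset Strict Implicit. Unset Printing Implicit Defensive.

Definition mx_digraph (k : nat) (S : 'M[nat]_k) : rel 'I_k :=
  fun i j => S i j != 0%N.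

Definition irreducible_mx (k : nat) (S : 'M[nat]_k) : Prop :=
  forall i j : 'I_k, connect (mx_digraph S) i j.

Definition simple_graph (T : finType) (e : rel T) : Prop :=
  symmetric e /\ irreflexive e.

Definition connected_graph (T : finType) (e : rel T) : Prop :=
  forall x y : T, connect e x y.

(* S-regular: a partition of the vertices into nonempty cells V_1..V_k,
   given by the cell map c : T -> 'I_k (surjective = cells nonempty), such that
   every v in V_i has exactly s_ij neighbours in V_j. *)
Definition S_regular (k : nat) (S : 'M[nat]_k) (T : finType) (e : rel T) : Prop :=
  exists c : T -> 'I_k,
    (forall i : 'I_k, exists v : T, c v = i) /\
    (forall (v : T) (j : 'I_k), #|[set w | e v w & c w == j]| = S (c v) j).

(* Irreducibility forces every |n_i| to be positive, so after scaling we get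
   positive integers h_i with h_i s_ij = h_j s_ji and s_ij <= gcd(h_i, h_j).
   Blow cell i up to 2h_i vertices numbered 0 .. 2h_i - 1.  For i <> j let
   g = gcd(2h_i, 2h_j); the balance equations make r = s_ij / (2h_j / g)
   = s_ji / (2h_i / g) an integer, and joining x in V_i to y in V_j iff
   (x + y) mod g < r gives every vertex of V_i exactly r (2h_j / g) = s_ij
   neighbours in V_j.  Inside V_i, join the two halves by x ~ y iff
   (x + y) mod h_i < s_ii.  This graph is S-regular, and by irreducibility
   each of its connected components meets every cell, so any component is a
   connected S-regular graph. *)

From mathcomp Require Import all_boot all_order all_algebra.
From mathcomp Require Import ring.
Set Implicit Arguments. Unset Strict Implicit. Unset Printing Implicit Defensive.

Lemma sum_nat_mod_shift (F : nat -> nat) x d :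
  \sum_(0 <= y < d) F ((x + y) %% d) = \sum_(0 <= y < d) F y.
Proof.
case: d => [|d]; first by rewrite !big_geq.
elim: x => [|x IH].
  by apply: eq_big_nat => y /andP[_ yd]; rewrite add0n modn_small.
rewrite -IH [LHS]big_nat_recr // [RHS]big_nat_recl //= addn0 addnC.
by rewrite addSnnS modnDr; congr (_ + _); apply: eq_bigr => y _; rewrite addSnnS.
Qed.

Lemma sum_nat_mod_period (F : nat -> nat) x d q :
  \sum_(0 <= y < d * q) F ((x + y) %% d) = q * \sum_(0 <= y < d) F y.
Proof.
elim: q => [|q IH]; first by rewrite muln0 big_geq.
rewrite mulnS mulSn (big_cat_nat _ (n := d)) ?leq_addr //= sum_nat_mod_shift.
rewrite (big_addn 0 _ d) addKn -IH.
by congr (_ + _); apply: eq_bigr => y _; rewrite addnA modnDr.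
Qed.

Lemma sum_nat_lt d r : r <= d -> \sum_(0 <= y < d) (y < r) = r.
Proof.
move=> rd; rewrite (big_cat_nat _ (n := r)) //=.
have -> : \sum_(r <= y < d) (y < r) = 0.
  by rewrite big_nat_cond big1 // => y /andP[/andP[ry _] _]; rewrite ltnNge ry.
rewrite addn0 -[RHS]subn0 -[RHS]muln1 -sum_nat_const_nat.
by apply: eq_big_nat => y /andP[_ ->].
Qed.

Lemma sum_nat_mod_lt x d q r : r <= d ->
  \sum_(0 <= y < d * q) ((x + y) %% d < r) = q * r.
Proof. by move=> rd; rewrite (sum_nat_mod_period (fun z => z < r)) sum_nat_lt. Qed.

Lemma balanced_gcd_div a b s t : 0 < a -> 0 < b -> a * s = b * t ->
  s = s %/ (b %/ gcdn a b) * (b %/ gcdn a b) /\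
  t = s %/ (b %/ gcdn a b) * (a %/ gcdn a b).
Proof.
move=> a0 b0 ast; set g := gcdn a b; set p := a %/ g; set q := b %/ g.
have g0 : 0 < g by rewrite gcdn_gt0 a0.
have ap : a = p * g by rewrite divnK ?dvdn_gcdl.
have bq : b = q * g by rewrite divnK ?dvdn_gcdr.
have b_dvd_sg : b %| s * g.
  by rewrite /g mulnC muln_gcdl dvdn_gcd ast !dvdn_mulr.
have sq : s = s %/ q * q by rewrite divnK // -(dvdn_pmul2r g0) -bq.
split=> //; apply/eqP; rewrite -(eqn_pmul2l b0) -ast {1}sq ap bq.
by apply/eqP; ring.
Qed.

Lemma card_tag_set (I : finType) (T_ : I -> finType) (P : pred {i : I & T_ i}) j :
  #|[set w | P w & tag w == j]| = #|[set y : T_ j | P (Tagged T_ y)]|.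
Proof.
rewrite -(card_imset _ (@eq_from_Tagged _ T_ j)); apply: eq_card => w; rewrite inE.
apply/andP/imsetP=> [[Pw /eqP tw]|[y + ->]]; last by rewrite inE /= eqxx; split.
by case: w tw Pw => i y /= <-; exists y; rewrite ?inE.
Qed.

Lemma card_ord_set n (f : nat -> bool) :
  #|[set y : 'I_n | f y]| = \sum_(0 <= y < n) f y.
Proof.
by rewrite -sum1_card big_mkcond big_mkord; apply: eq_bigr => y _; rewrite inE; case: f.
Qed.

Lemma connect_preserves (T : finType) (e : rel T) (P : T -> Prop) :
  (forall x y, e x y -> P x -> P y) -> forall x y, connect e x y -> P x -> P y.
Proof.
move=> eP x _ /connectP[p + ->]; elim: p x => //= y p IHp x /andP[exy ep] Px.
exact: IHp ep (eP x y exy Px).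
Qed.

Lemma simple_graph_relpre (T T' : finType) (f : T' -> T) (e : rel T) :
  simple_graph e -> simple_graph (relpre f e).
Proof. by case=> esym eirr; split=> [x y|x]; [exact: esym | exact: eirr]. Qed.

Lemma irreducible_balanced_gt0 k (S : 'M[nat]_k) (n : 'I_k -> nat) i :
  irreducible_mx S -> (forall i j, n i * S i j = n j * S j i) ->
  0 < n i -> forall j, 0 < n j.
Proof.
move=> irr bal ni j.
apply: (connect_preserves (P := fun i => 0 < n i)) (irr i j) ni => {}i {}j Sij ni_gt0.
have : 0 < n i * S i j by rewrite muln_gt0 ni_gt0 lt0n.
by rewrite bal muln_gt0 => /andP[].
Qed.

Lemma regular_cells_reachable k (S : 'M[nat]_k) (T : finType) (e : rel T)
    (c : T -> 'I_k) :
  irreducible_mx S -> (forall v j, #|[set w | e v w & c w == j]| = S (c v) j) ->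
  forall v j, exists2 w, connect e v w & c w = j.
Proof.
move=> irr c_nbhd v j.
apply: (connect_preserves (P := fun i => exists2 w, connect e v w & c w = i))
  (irr (c v) j) _; last by exists v.
move=> i j' Sij' [w vw cw].
have : 0 < #|[set u | e w u & c u == j']| by rewrite c_nbhd cw lt0n.
case/card_gt0P=> u; rewrite inE => /andP[wu /eqP cu].
by exists u => //; apply: connect_trans vw (connect1 wu).
Qed.

Section Component.
Variables (T : finType) (e : rel T) (v0 : T).

Definition component := {x : T | connect e v0 x}.

Lemma component_connected :
  symmetric e -> connected_graph (relpre (val : component -> T) e).
Proof.
move=> esym; pose v0' : component := exist _ v0 (connect0 e v0).
have from_v0 (y : component) : connect (relpre val e) v0' y.
  pose P t := exists2 w : component, connect (relpre val e) v0' w & val w = t.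
  have [w v0w /val_inj <- //] : P (val y).
    apply: (connect_preserves (P := P)) (valP y) _; last by exists v0'.
    move=> t u tu [w v0w wt]; rewrite -wt in tu.
    exists (exist _ u (connect_trans (valP w) (connect1 tu))) => //.
    exact: connect_trans v0w (connect1 _).
move=> x y; apply: connect_trans (from_v0 y).
by rewrite (sym_connect_sym (fun x y => esym (val x) (val y))) from_v0.
Qed.

Lemma component_S_regular k (S : 'M[nat]_k) :
  irreducible_mx S -> S_regular S e -> S_regular S (relpre (val : component -> T) e).
Proof.
move=> irr [c [_ c_nbhd]]; exists (c \o val); split=> [j|v j].
  have [w v0w cw] := regular_cells_reachable irr c_nbhd v0 j.
  by exists (exist _ w v0w).
rewrite -c_nbhd -(card_imset _ val_inj); apply: eq_card => u; rewrite inE.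
apply/imsetP/andP=> [[w + ->]|[vu cu]]; first by rewrite inE => /andP.
have v0u : connect e v0 u by apply: connect_trans (valP v) (connect1 vu).
by exists (exist _ u v0u); rewrite // inE /= vu.
Qed.

End Component.

Lemma exists_connected_S_regular k (S : 'M[nat]_k) (T : finType) (e : rel T) :
  'I_k -> irreducible_mx S -> simple_graph e -> S_regular S e ->
  exists (T' : finType) (e' : rel T'),
    simple_graph e' /\ connected_graph e' /\ S_regular S e'.
Proof.
move=> i irr e_simple reg; have [c [c_onto _]] := reg; have [v0 _] := c_onto i.
exists (component e v0), (relpre val e); split; first exact: simple_graph_relpre.
by split; [exact: component_connected e_simple.1 | exact: component_S_regular].
Qed.

Section Blowup.
Variables (k : nat) (S : 'M[nat]_k) (h : 'I_k -> nat).
Hypothesis h_gt0 : forall i, 0 < h i.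
Hypothesis h_balanced : forall i j, h i * S i j = h j * S j i.
Hypothesis S_le_gcd : forall i j, S i j <= gcdn (h i) (h j).

Definition blowup := {i : 'I_k & 'I_(h i).*2}.

Definition cross_mod i j := gcdn (h i).*2 (h j).*2.

Definition cross_width i j := S i j %/ ((h j).*2 %/ cross_mod i j).

Definition blowup_adj (i : 'I_k) (x : nat) (j : 'I_k) (y : nat) : bool :=
  if i == j then ((x < h i) != (y < h i)) && ((x + y) %% h i < S i i)
  else (x + y) %% cross_mod i j < cross_width i j.

Definition blowup_rel : rel blowup :=
  fun u v => blowup_adj (tag u) (tagged u) (tag v) (tagged v).

Lemma cross_widthE i j :
  S i j = cross_width i j * ((h j).*2 %/ cross_mod i j) /\
  S j i = cross_width i j * ((h i).*2 %/ cross_mod i j).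
Proof.
apply: balanced_gcd_div; rewrite ?double_gt0 //.
by rewrite -!muln2 mulnAC h_balanced mulnAC.
Qed.

Lemma cross_widthC i j : cross_width i j = cross_width j i.
Proof.
have [_ Sji] := cross_widthE i j.
rewrite [RHS]/cross_width Sji [cross_mod j i]/cross_mod gcdnC mulnK //.
by rewrite divn_gt0 ?gcdn_gt0 ?double_gt0 // dvdn_leq ?double_gt0 ?dvdn_gcdl.
Qed.

Lemma blowup_adjC i x j y : blowup_adj i x j y = blowup_adj j y i x.
Proof.
rewrite /blowup_adj eq_sym; case: eqP => [<-|_].
  by rewrite addnC; case: (x < _); case: (y < _).
by rewrite /cross_mod gcdnC addnC cross_widthC.
Qed.

Lemma blowup_simple : simple_graph blowup_rel.
Proof.
by split=> [u v|u]; [exact: blowup_adjC | rewrite /blowup_rel /blowup_adj !eqxx].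
Qed.

Lemma blowup_nbhd_card (v : blowup) j :
  #|[set w | blowup_rel v w & tag w == j]| =
  \sum_(0 <= y < (h j).*2) blowup_adj (tag v) (tagged v) j y.
Proof. by rewrite card_tag_set; apply: card_ord_set. Qed.

Lemma sum_blowup_adj_cross i x j : i != j ->
  \sum_(0 <= y < (h j).*2) blowup_adj i x j y = S i j.
Proof.
move=> /negbTE ij; rewrite /blowup_adj ij.
have hj : (h j).*2 = cross_mod i j * ((h j).*2 %/ cross_mod i j).
  by rewrite mulnC divnK ?dvdn_gcdr.
have [Sij _] := cross_widthE i j.
rewrite {1}hj sum_nat_mod_lt; first by rewrite mulnC.
rewrite (leq_trans (leq_div _ _)) // (leq_trans (S_le_gcd i j)) //.
by rewrite /cross_mod -!muln2 -muln_gcdl muln2 -addnn leq_addr.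
Qed.

Lemma sum_blowup_adj_diag i x :
  \sum_(0 <= y < (h i).*2) blowup_adj i x i y = S i i.
Proof.
rewrite /blowup_adj eqxx -addnn (big_cat_nat _ (n := h i)) ?leq_addr //=.
rewrite (big_addn 0 _ (h i)) addnK.
have window : \sum_(0 <= y < h i) ((x + y) %% h i < S i i) = S i i.
  rewrite (sum_nat_mod_shift (fun z => z < S i i)) sum_nat_lt //.
  by rewrite -[h i in X in _ <= X]gcdnn.
have high y : (y + h i < h i) = false by rewrite ltnNge leq_addl.
under eq_big_nat => y /andP[_ ->] do [].
under [X in _ + X]eq_bigr => y _ do rewrite high addnA modnDr.
by case: (x < h i); rewrite /= window big_nat_cond big1 ?addn0 // => y /andP[].
Qed.

Lemma blowup_S_regular : S_regular S blowup_rel.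
Proof.
exists (fun v => tag v); split=> [i|v j].
  have hi : 0 < (h i).*2 by rewrite double_gt0.
  by exists (Tagged (fun i => 'I_(h i).*2) (Ordinal hi)).
rewrite blowup_nbhd_card; have [<-|ij] := eqVneq (tag v) j.
  exact: sum_blowup_adj_diag.
exact: sum_blowup_adj_cross.
Qed.

End Blowup.

Theorem mainTheorem2 (k : nat) (S : 'M[nat]_k) :
  irreducible_mx S ->
  (exists n : 'I_k -> int,
      (exists i, n i != 0) /\
      (forall i j : 'I_k, (n i * (S i j)%:Z = n j * (S j i)%:Z)%R)) ->
  exists (T : finType) (e : rel T),
    simple_graph e /\ connected_graph e /\ S_regular S e.
Proof.
move=> irr [n [[i0 ni0] bal]].
pose w i := `|n i|%N.
have w_bal i j : w i * S i j = w j * S j i.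
  by have := congr1 absz (bal i j); rewrite !abszM !absz_nat.
have w_i0 : 0 < w i0 by rewrite absz_gt0.
have w_gt0 := irreducible_balanced_gt0 irr w_bal w_i0.
pose M := (\max_(ij : 'I_k * 'I_k) S ij.1 ij.2).+1.
pose h i := w i * M.
have h_gt0 i : 0 < h i by rewrite muln_gt0 w_gt0.
have h_bal i j : h i * S i j = h j * S j i by rewrite mulnAC w_bal mulnAC.
have S_le_gcd i j : S i j <= gcdn (h i) (h j).
  rewrite -muln_gcdl (leq_trans _ (leq_pmull _ _)) ?gcdn_gt0 ?w_gt0 //.
  exact: leqW (leq_bigmax (i, j)).
exact: (exists_connected_S_regular i0 irr (blowup_simple h_gt0 h_bal)
  (blowup_S_regular h_gt0 h_bal S_le_gcd)).
Qed.
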